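(* Let $(X_1,Y_1),\dots,(X_{n+1},Y_{n+1})$ be data with $L_i=\mathcal{L}(f,X_i,Y_i)\in[0,1]$, $s:\mathcal{X}\to[0,1]$ a score, $w:\mathcal{X}\to(0,\infty)$ a weight function, $\alpha,\gamma\in(0,1)$, and $E_{\gamma,n+1}$ the weighted e-value below. If $\gamma\le\alpha$, then $$\mathbf{1}\{E_{\gamma,n+1}\ge1/\alpha\}=\mathbf{1}\Big\{\frac{w(X_{n+1})+\sum_{i=1}^nw(X_i)L_i\mathbf{1}\{s(X_i)\le s(X_{n+1})\}}{\sum_{i=1}^{n+1}w(X_i)}\le\gamma\Big\}.$$ If $\gamma>\alpha$, then $E_{\gamma,n+1}\ge1/\alpha$ if and only if both $\frac{w(X_{n+1})+\sum_{i=1}^nw(X_i)L_i\mathbf{1}\{s(X_i)\le s(X_{n+1})\}}{\sum_{i=1}^{n+1}w(X_i)}\le\gamma$ and, for all $t\in\mathcal{M}$ and $\ell\in[0,1]$, $\frac{\ell w(X_{n+1})+\sum_{i=1}^nw(X_i)L_i\mathbf{1}\{s(X_i)\le t\}}{\sum_{i=1}^{n+1}w(X_i)}\notin(\alpha,\gamma]$.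
   Context: Let $w_i=w(X_i)$, $\mathcal{M}=\{s(X_i)\}_{i=1}^{n+1}$, $F(t;\ell)=\frac{\sum_{i=1}^nw_iL_i\mathbf{1}\{s(X_i)\le t\}+w_{n+1}\ell\mathbf{1}\{s(X_{n+1})\le t\}}{\sum_{i=1}^{n+1}w_i}$, $t_\gamma(\ell)=\max\{t\in\mathcal{M}:F(t;\ell)\le\gamma\}$ ($\max\emptyset=-\infty$), and $E_{\gamma,n+1}=\inf_{\ell\in[0,1]}\frac{\mathbf{1}\{s(X_{n+1})\le t_\gamma(\ell)\}\sum_{i=1}^{n+1}w_i}{\sum_{i=1}^nw_iL_i\mathbf{1}\{s(X_i)\le t_\gamma(\ell)\}+w_{n+1}\ell\mathbf{1}\{s(X_{n+1})\le t_\gamma(\ell)\}}$, each ratio $0$ when its numerator is $0$ and $+\infty$ when the numerator is positive and the denominator $0$; $E_{\gamma,n+1}=0$ if $\inf_\ell t_\gamma(\ell)=-\infty$. *)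

From HB Require Import structures.
From mathcomp Require Import all_boot all_order all_algebra.
From mathcomp Require Import boolp classical_sets reals constructive_ereal ereal.
Set Implicit Arguments. Unset Strict Implicit. Unset Printing Implicit Defensive.
Import Order.TTheory GRing.Theory Num.Theory.
Local Open Scope ring_scope.
Local Open Scope classical_set_scope.

(* Indexing convention: calibration points are indices 0 .. n-1 (paper: 1..n),
   the test point is index n (paper: n+1). *)
Definition ind (R : realType) (b : bool) : R := if b then 1 else 0.

Section Evalue.
Variables (R : realType) (X : Type).
Variables (s w : X -> R) (L : nat -> R) (x : nat -> X) (n : nat).

Definition Wtot : R := \sum_(i < n.+1) w (x i).

Definition Mset : set R := [set t | exists2 i : nat, (i <= n)%N & t = s (x i)].

Definition Fw (t l : R) : R :=
  (\sum_(i < n) w (x i) * L i * ind R (s (x i) <= t)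
     + w (x n) * l * ind R (s (x n) <= t)) / Wtot.

(* t_gamma(l) = max {t in M : F(t;l) <= gamma}, with max of empty = -oo *)
Definition tgam (g l : R) : \bar R :=
  ereal_sup [set t%:E | t in [set t | Mset t /\ Fw t l <= g]].

Definition eratio (N D : R) : \bar R :=
  if N == 0 then 0%E else if D == 0 then +oo%E else (N / D)%:E.

Definition Eratio (g l : R) : \bar R :=
  let T := tgam g l in
  eratio (ind R ((s (x n))%:E <= T)%E * Wtot)
         (\sum_(i < n) w (x i) * L i * ind R ((s (x i))%:E <= T)%E
            + w (x n) * l * ind R ((s (x n))%:E <= T)%E).

Definition Evalue (g : R) : \bar R :=
  if ereal_inf [set tgam g l | l in [set l : R | 0 <= l <= 1]] == -oo%E then 0%E
  else ereal_inf [set Eratio g l | l in [set l : R | 0 <= l <= 1]].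

End Evalue.

(* F(t; l) counts the test point (index n) exactly when t >= s(x n).  If
   F(s(x n); 1) > gamma, every point of M with F(t; 1) <= gamma lies below
   s(x n), so the ratio at l = 1 has numerator 0 and E <= 0.  Otherwise
   t_gamma(l) >= s(x n) for every l in [0, 1], so the ratio at l is
   1 / F(t_gamma(l); l) and E >= 1/alpha iff F(t_gamma(l); l) <= alpha for all
   l.  Since t_gamma(l) is the largest point of M with F <= gamma, this fails
   exactly when some t in M and l put F, with the test point counted, in
   (alpha, gamma]; that interval is empty when gamma <= alpha. *)

From HB Require Import structures.
From mathcomp Require Import all_boot all_order all_algebra.
From mathcomp Require Import boolp classical_sets reals constructive_ereal ereal.
Set Implicit Arguments. Unset Strict Implicit. Unset Printing Implicit Defensive.
Import Order.TTheory GRing.Theory Num.Theory.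
Local Open Scope ring_scope.
Local Open Scope classical_set_scope.

Lemma exists_argmax d (T : orderType d) (f : nat -> T) (P : pred T) n i0 :
  (i0 <= n)%N -> P (f i0) ->
  exists2 m, (m <= n)%N & P (f m) /\ forall j, (j <= n)%N -> P (f j) -> (f j <= f m)%O.
Proof.
move=> i0n Pi0.
have [m Pm m_max] := @arg_maxP _ T _ (Ordinal (i0n : (i0 < n.+1)%N))
  (fun i : 'I_n.+1 => P (f i)) (fun i => f i) Pi0.
exists m; first by rewrite -ltnS.
by split=> // j jn; exact: (m_max (Ordinal (jn : (j < n.+1)%N))).
Qed.

Lemma ind_ge0 (R : realType) (b : bool) : 0 <= ind R b.
Proof. by case: b. Qed.

Lemma ind_le (R : realType) (b c : bool) : (b -> c) -> ind R b <= ind R c.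
Proof. by case: b; case: c => // /(_ isT). Qed.

Lemma eratio0 (R : realType) (D : R) : eratio 0 D = 0%E.
Proof. by rewrite /eratio eqxx. Qed.

Lemma eratio_ge_inv (R : realType) (N D a : R) : 0 < N -> 0 <= D -> 0 < a ->
  ((1 / a)%:E <= eratio N D)%E = (D <= a * N).
Proof.
move=> N_gt0 D_ge0 a_gt0; rewrite /eratio gt_eqF //.
have [->|D_neq0] := eqVneq D 0; first by rewrite leey mulr_ge0 // ltW.
have D_gt0 : 0 < D by rewrite lt0r D_neq0.
by rewrite lee_fin ler_pdivlMr // mul1r mulrC ler_pdivrMr // mulrC.
Qed.

Section WeightedEvalue.
Variables (R : realType) (X : Type) (s w : X -> R) (L : nat -> R) (x : nat -> X) (n : nat).
Hypothesis L_ge0 : forall i, (i < n)%N -> 0 <= L i.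
Hypothesis w_gt0 : forall z, 0 < w z.

Local Notation W := (Wtot w x n).
Local Notation M := (Mset s x n).
Local Notation Fw := (Fw s w L x n).
Local Notation tgam := (tgam s w L x n).
Local Notation Eratio := (Eratio s w L x n).
Local Notation Evalue := (Evalue s w L x n).

Lemma Wtot_gt0 : 0 < W.
Proof.
rewrite /Wtot big_ord_recl ltr_pwDl //.
by apply: sumr_ge0 => i _; exact: ltW.
Qed.

Definition wloss (t : R) := \sum_(i < n) w (x i) * L i * ind R (s (x i) <= t).

Lemma wloss_ge0 (t : R) : 0 <= wloss t.
Proof. by apply: sumr_ge0 => i _; rewrite !mulr_ge0 ?ind_ge0 ?L_ge0 ?ltW. Qed.

Lemma wloss_le (t t' : R) : t <= t' -> wloss t <= wloss t'.
Proof.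
move=> le_tt'; apply: ler_sum => i _.
apply: ler_wpM2l; first by rewrite mulr_ge0 ?L_ge0 ?ltW.
by apply: ind_le => /le_trans; exact.
Qed.

Definition Fw_incl (t l : R) := (l * w (x n) + wloss t) / W.

Lemma Fw_inclE (t l : R) : s (x n) <= t -> Fw t l = Fw_incl t l.
Proof. by move=> le_st; rewrite /Fw le_st mulr1 addrC [w _ * l]mulrC. Qed.

Lemma Fw_ge0 (t l : R) : 0 <= l -> 0 <= Fw t l.
Proof.
move=> l_ge0; apply: divr_ge0; last exact: ltW Wtot_gt0.
by rewrite addr_ge0 ?wloss_ge0 // !mulr_ge0 ?ind_ge0 // ltW.
Qed.

Lemma Fw_incl_le_t (t t' l : R) : t <= t' -> Fw_incl t l <= Fw_incl t' l.
Proof.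
by move=> le_tt'; rewrite ler_pM2r ?invr_gt0 ?Wtot_gt0 // lerD2l wloss_le.
Qed.

Lemma Fw_incl_le_l (t l l' : R) : l <= l' -> Fw_incl t l <= Fw_incl t l'.
Proof.
by move=> le_ll'; rewrite ler_pM2r ?invr_gt0 ?Wtot_gt0 // lerD2r ler_pM2r.
Qed.

Definition is_tgam (g l t : R) :=
  [/\ M t, Fw t l <= g & forall t', M t' -> Fw t' l <= g -> t' <= t].

Lemma exists_is_tgam (g l t0 : R) : M t0 -> Fw t0 l <= g -> exists t, is_tgam g l t.
Proof.
case=> i0 i0n -> Pi0.
have [m mn [Pm m_max]] := exists_argmax (f := s \o x)
  (P := fun t => Fw t l <= g) i0n Pi0.
exists (s (x m)); split=> //; first by exists m.
by move=> _ [j jn ->]; exact: m_max.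
Qed.

Lemma exists_is_tgam_test (g l : R) :
  Fw_incl (s (x n)) l <= g -> exists t, is_tgam g l t.
Proof.
by move=> test; apply: (exists_is_tgam (t0 := s (x n))); [exists n | rewrite Fw_inclE].
Qed.

Lemma tgamE (g l t : R) : is_tgam g l t -> tgam g l = t%:E.
Proof.
case=> Mt Pt t_max; apply/le_anti/andP; split.
- by apply: ge_ereal_sup => y [t' [Mt' Pt'] <-]; rewrite lee_fin t_max.
- by apply: ereal_sup_ubound; exists t.
Qed.

Lemma tgamP (g l : R) : tgam g l = -oo%E \/ exists t, is_tgam g l t.
Proof.
have [[t0 Mt0 Pt0]|none] := pselect (exists2 t, M t & Fw t l <= g).
  by right; exact: exists_is_tgam Mt0 Pt0.
left; rewrite /tgam; set S := (X in ereal_sup X).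
suff -> : S = set0 by exact: ereal_sup0.
by apply/seteqP; split=> // y [t [Mt Pt] _]; apply: none; exists t.
Qed.

Lemma test_le_tgamP (g l : R) :
  ((s (x n))%:E <= tgam g l)%E <-> Fw_incl (s (x n)) l <= g.
Proof.
have Mtest : M (s (x n)) by exists n.
split=> [|test].
- have [->|[t tg]] := tgamP g l; first by rewrite leeNy_eq.
  rewrite (tgamE tg) lee_fin => le_st; case: tg => _ Pt _.
  by apply: (le_trans _ Pt); rewrite Fw_inclE // Fw_incl_le_t.
- by apply: ereal_sup_ubound; exists (s (x n)); first split; rewrite // Fw_inclE.
Qed.

Lemma is_tgam_test_le (g l t : R) :
  Fw_incl (s (x n)) l <= g -> is_tgam g l t -> s (x n) <= t.
Proof. by move=> test [_ _]; apply; [exists n | rewrite Fw_inclE]. Qed.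

Lemma Eratio_fin (g l t : R) : tgam g l = t%:E ->
  Eratio g l = eratio (ind R (s (x n) <= t) * W) (Fw t l * W).
Proof.
by move=> tgE; rewrite /Eratio /= tgE /Fw divfK ?gt_eqF ?Wtot_gt0 // !lee_fin.
Qed.

Lemma Evalue_le0 (g : R) : ~ Fw_incl (s (x n)) 1 <= g -> (Evalue g <= 0)%E.
Proof.
move=> ntest; rewrite /Evalue; case: ifP => // _.
have I1 : [set l : R | 0 <= l <= 1] 1 by rewrite /= ler01 lexx.
apply: le_trans (ereal_inf_lbound (ex_intro2 _ _ 1 I1 erefl)) _.
rewrite /Eratio /=.
have -> : ((s (x n))%:E <= tgam g 1)%E = false by apply/negP => /test_le_tgamP.
by rewrite mul0r eratio0.
Qed.

Lemma Evalue_ge_inv_tgam (g a : R) : 0 < a -> Fw_incl (s (x n)) 1 <= g ->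
  ((1 / a)%:E <= Evalue g)%E <->
  forall l t : R, 0 <= l <= 1 -> is_tgam g l t -> Fw t l <= a.
Proof.
move=> a_gt0 test.
have test_l (l : R) : 0 <= l <= 1 -> Fw_incl (s (x n)) l <= g.
  by case/andP=> _ l_le1; exact: le_trans (Fw_incl_le_l _ l_le1) test.
have Eratio_ge (l t : R) : 0 <= l <= 1 -> is_tgam g l t ->
    ((1 / a)%:E <= Eratio g l)%E = (Fw t l <= a).
  move=> Il tg; have /andP[l_ge0 _] := Il.
  rewrite (Eratio_fin (tgamE tg)) (is_tgam_test_le (test_l l Il) tg).
  rewrite eratio_ge_inv ?mul1r ?ler_pM2r ?Wtot_gt0 //.
  by rewrite mulr_ge0 ?Fw_ge0 // ltW // Wtot_gt0.
have tgam_ge : ((s (x n))%:E <=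
    ereal_inf [set tgam g l | l in [set l : R | (0 <= l <= 1)%R]])%E.
  by apply: le_ereal_inf_tmp => _ [l Il <-]; apply/test_le_tgamP/test_l.
rewrite /Evalue ifF; last by apply/eqP => infNy; move: tgam_ge; rewrite infNy leeNy_eq.
split=> [E_ge l t Il tg | E_ge].
- rewrite -(Eratio_ge l t Il tg); apply: le_trans E_ge _.
  by apply: ereal_inf_lbound; exists l.
- apply: le_ereal_inf_tmp => _ [l Il <-].
  have [t tg] := exists_is_tgam_test (test_l l Il).
  by rewrite (Eratio_ge l t Il tg) E_ge.
Qed.

Lemma Evalue_ge_inv (g a : R) : 0 < a ->
  ((1 / a)%:E <= Evalue g)%E <->
  Fw_incl (s (x n)) 1 <= g /\
  forall t l : R, M t -> 0 <= l <= 1 -> ~ (a < Fw_incl t l <= g).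
Proof.
move=> a_gt0; have [test|ntest] := boolP (Fw_incl (s (x n)) 1 <= g); last first.
  split=> [E_ge|[//]].
  have := le_trans E_ge (Evalue_le0 (elimN idP ntest)).
  by rewrite lee_fin leNgt divr_gt0.
rewrite (Evalue_ge_inv_tgam a_gt0 test); split=> [tgam_le | [_ not_between] l t Il tg].
- split=> // t l Mt Il /andP[a_lt le_g]; have /andP[_ l_le1] := Il.
  have test_l := le_trans (Fw_incl_le_l _ l_le1) test.
  have [t' tg'] := exists_is_tgam_test test_l.
  have le_st' := is_tgam_test_le test_l tg'.
  have le_tt' : t <= t'.
    (* either t < s(x n) <= t', or F(t; l) counts the test point and is <= g *)
    have [lt_ts|le_st] := ltP t (s (x n)); first exact: le_trans (ltW lt_ts) le_st'.
    by case: tg' => _ _; apply=> //; rewrite Fw_inclE.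
  have := tgam_le l t' Il tg'.
  by rewrite Fw_inclE // leNgt (lt_le_trans a_lt (Fw_incl_le_t l le_tt')).
- have /andP[_ l_le1] := Il.
  have le_st := is_tgam_test_le (le_trans (Fw_incl_le_l _ l_le1) test) tg.
  case: tg => Mt le_g _; rewrite Fw_inclE // in le_g *.
  by rewrite leNgt; apply/negP => a_lt; apply: (not_between t l) => //; rewrite a_lt.
Qed.

End WeightedEvalue.

Theorem propositionA1 (R : realType) (X Y : Type) (loss : X -> Y -> R)
  (x : nat -> X) (y : nat -> Y) (n : nat) (s w : X -> R) (alpha gamma : R) :
  (forall i, (i < n)%N -> 0 <= loss (x i) (y i) <= 1) ->
  (forall z, 0 <= s z <= 1) ->
  (forall z, 0 < w z) ->
  0 < alpha < 1 -> 0 < gamma < 1 ->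
  let L := fun i => loss (x i) (y i) in
  let E := Evalue s w L x n gamma in
  let W := Wtot w x n in
  let cond := (w (x n) + \sum_(i < n) w (x i) * L i * ind R (s (x i) <= s (x n))) / W
                <= gamma in
  (gamma <= alpha -> ((1 / alpha)%:E <= E)%E <-> cond) /\
  (alpha < gamma ->
     ((1 / alpha)%:E <= E)%E <->
     (cond /\
      forall t l, Mset s x n t -> 0 <= l <= 1 ->
        ~ (alpha < (l * w (x n) + \sum_(i < n) w (x i) * L i * ind R (s (x i) <= t)) / W
           <= gamma))).
Proof.
move=> loss01 _ w_gt0 /andP[alpha_gt0 _] _ L E W cond.
have L_ge0 i : (i < n)%N -> 0 <= L i by move/loss01/andP=> [].
have condE : cond = (Fw_incl s w L x n (s (x n)) 1 <= gamma).
  by rewrite /Fw_incl mul1r.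
have E_geP := Evalue_ge_inv s x L_ge0 w_gt0 gamma alpha_gt0.
rewrite condE; split=> [le_ga | _]; last exact: E_geP.
rewrite E_geP; split=> [[]//|test]; split=> // t l _ _ /andP[a_lt g_ge].
by have := lt_le_trans a_lt (le_trans g_ge le_ga); rewrite ltxx.
Qed.
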